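(* There is an absolute constant $C>0$ such that for every $n\in\mathbb{N}$, every nonempty $B\subseteq[n]$ and every $\varepsilon\in(0,1)$, there is a randomized nonadaptive algorithm which, given oracle access to $g:B\to\mathbb{R}$, makes at most $C\cdot\max\{1,\log_2(\varepsilon|B|)\}$ queries, accepts with probability $1$ whenever $g$ is convex, and rejects with probability at least $\varepsilon$ whenever $g$ is $\varepsilon$-far from convex.
   Context: For a finite set $B\subseteq\mathbb{R}$, $g:B\to\mathbb{R}$ is convex if $\frac{g(y)-g(x)}{y-x}\le\frac{g(z)-g(y)}{z-y}$ for all $x<y<z$ in $B$ (using the actual positions of the points). $g$ is $\varepsilon$-far from convex if every convex $h:B\to\mathbb{R}$ differs from $g$ on at least $\varepsilon|B|$ points of $B$. Nonadaptive means all query points are chosen (randomly) before any answer is seen. *)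

From HB Require Import structures.
From mathcomp Require Import all_boot all_order all_algebra.
From mathcomp Require Import reals exp Rstruct.
Set Implicit Arguments. Unset Strict Implicit. Unset Printing Implicit Defensive.
Import Order.TTheory GRing.Theory Num.Theory.
Local Open Scope ring_scope.

Notation R := Rdefinitions.R.

(* [n] = {1,...,n} is represented inside 'I_n.+1 = {0,...,n}; a subset B of [n]
   is a finset of 'I_n.+1 not containing 0. A function B -> R is represented by a
   total function 'I_n.+1 -> R of which only the values on B matter. *)
Definition subset_of_n (n : nat) (B : {set 'I_n.+1}) : Prop :=
  forall i : 'I_n.+1, i \in B -> (0 < i)%N.

Definition pos (n : nat) (i : 'I_n.+1) : R := (nat_of_ord i)%:R.

Definition convex_on (n : nat) (B : {set 'I_n.+1}) (g : 'I_n.+1 -> R) : Prop :=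
  forall x y z : 'I_n.+1, x \in B -> y \in B -> z \in B ->
    (x < y)%N -> (y < z)%N ->
    (g y - g x) / (pos y - pos x) <= (g z - g y) / (pos z - pos y).

Definition far_from_convex (n : nat) (B : {set 'I_n.+1}) (eps : R)
  (g : 'I_n.+1 -> R) : Prop :=
  forall h : 'I_n.+1 -> R, convex_on B h ->
    eps * (#|B|)%:R <= (#|[set x in B | g x != h x]|)%:R.

Definition log2 (x : R) : R := ln x / ln 2.

(* A randomized nonadaptive tester on B: a finite probability space Omega with
   weights p; for each random seed w, a list of query points Q w (all in B),
   chosen before any answer is seen, and a decision D w applied to the list of
   answers (true = accept). *)
Record nonadaptive_tester (n : nat) (B : {set 'I_n.+1}) := NATester {
  seed : finType;
  prob : seed -> R;
  queries : seed -> seq 'I_n.+1;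
  decide : seed -> seq R -> bool;
  prob_ge0 : forall w, 0 <= prob w;
  prob_sum1 : \sum_(w : seed) prob w = 1;
  queries_in_B : forall w, all (fun x => x \in B) (queries w)
}.

Definition accept_prob n B (T : @nonadaptive_tester n B) (g : 'I_n.+1 -> R) : R :=
  \sum_(w : seed T | decide w (map g (queries w))) prob w.

Definition reject_prob n B (T : @nonadaptive_tester n B) (g : 'I_n.+1 -> R) : R :=
  \sum_(w : seed T | ~~ decide w (map g (queries w))) prob w.

Definition query_bound n B (T : @nonadaptive_tester n B) (q : R) : Prop :=
  forall w : seed T, (size (queries w))%:R <= q.

(* The tester picks a uniformly random index i of the increasing enumeration of B
   and checks convexity of g on the elements of indices i-1, i, i+1 and on the
   binary-search paths to i inside its block, for two partitions of the indices
   into blocks of length 2h shifted by 0 and by h, where h = floor(eps |B|) + 1.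
   That is O(log h) queries, and convex functions always pass.  If fewer than h
   indices fail, consecutive passing indices are at most h apart, hence share a
   block of one partition, and their search paths contain two adjacent indices
   between them; convexity on both query sets then squeezes the chord between
   them between the slopes of g at its ends.  Chaining, every passing index
   carries a line below g at all passing indices, and the maximum of these lines
   is a convex function equal to g there.  So g is within the number of failing
   indices of convex, and eps-farness forces at least eps |B| failures. *)

From mathcomp Require Import all_boot all_order all_algebra.
From mathcomp Require Import reals exp Rstruct.
From mathcomp Require Import ring lra zify.
Import Order.TTheory GRing.Theory Num.Theory.
Set Implicit Arguments. Unset Strict Implicit. Unset Printing Implicit Defensive.
Local Open Scope ring_scope.

Section Slopes.

Variables (f P : nat -> R) (m : nat).

Definition slope (i j : nat) : R := (f j - f i) / (P j - P i).

Lemma slopeK i j : P i < P j -> f j - f i = slope i j * (P j - P i).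
Proof. by move=> h; rewrite /slope divfK // gt_eqF // subr_gt0. Qed.

Lemma three_chord a b c : P a < P b -> P b < P c -> slope a b <= slope b c ->
  slope a b <= slope a c /\ slope a c <= slope b c.
Proof.
move=> ab bc le_uv.
have [dab dbc] : 0 < P b - P a /\ 0 < P c - P b by rewrite !subr_gt0.
have dac : P c - P a = (P b - P a) + (P c - P b) by ring.
have eac : f c - f a = slope a b * (P b - P a) + slope b c * (P c - P b).
  by rewrite -slopeK // -slopeK //; ring.
have dac0 : 0 < P c - P a by rewrite dac addr_gt0.
rewrite [slope a c]/slope eac; move: le_uv.
set u := slope a b; set v := slope b c => le_uv.
have := ler_pM2r dbc u v; rewrite le_uv => /esym h1.
have := ler_pM2r dab u v; rewrite le_uv => /esym h2.
split; [rewrite ler_pdivlMr // | rewrite ler_pdivrMr //]; rewrite dac; lra.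
Qed.

Definition increasing_below := forall i j, (i < j)%N -> (j < m)%N -> P i < P j.

Definition convex_at (S : pred nat) := forall a b c, S a -> S b -> S c ->
  (a < b)%N -> (b < c)%N -> slope a b <= slope b c.

Definition chord_bracketed x y :=
  slope x x.+1 <= slope x y /\ slope x y <= slope y.-1 y.

Hypothesis incrP : increasing_below.

Lemma convex_three_chord S a b c : convex_at S -> S a -> S b -> S c ->
  (a < b)%N -> (b < c)%N -> (c < m)%N ->
  slope a b <= slope a c /\ slope a c <= slope b c.
Proof.
move=> cvxS Sa Sb Sc ab bc cm.
by apply: three_chord; [apply: incrP; lia | apply: incrP | apply: cvxS].
Qed.

Lemma chord_bracketed_through Sx Sy x y p : convex_at Sx -> convex_at Sy ->
  (x <= p)%N -> (p < y)%N -> (y < m)%N ->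
  Sx x -> Sx x.+1 -> Sx p -> Sx p.+1 -> Sy p -> Sy p.+1 -> Sy y.-1 -> Sy y ->
  chord_bracketed x y.
Proof.
move=> cx cy xp py ym Sxx Sxx1 Sxp Sxp1 Syp Syp1 Syy1 Syy.
have p1m : (p.+1 < m)%N by apply: leq_ltn_trans ym.
have x_p1 : slope x x.+1 <= slope x p.+1.
  have [<-//|ne] := eqVneq x p.
  have xp' : (x.+1 < p.+1)%N by rewrite ltnS ltn_neqAle ne.
  by have [] := convex_three_chord cx Sxx Sxx1 Sxp1 (ltnSn x) xp' p1m.
have p1_p : slope x p.+1 <= slope p p.+1.
  have [->//|ne] := eqVneq x p.
  have xp' : (x < p)%N by rewrite ltn_neqAle ne.
  by have [] := convex_three_chord cx Sxx Sxp Sxp1 xp' (ltnSn p) p1m.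
have [ey|ne_y] := eqVneq y p.+1; first by rewrite /chord_bracketed ey.
have p1y : (p.+1 < y)%N by rewrite ltn_neqAle eq_sym ne_y.
have p_p1y : slope p p.+1 <= slope p.+1 y by apply: cy.
have p1y_y : slope p.+1 y <= slope y.-1 y.
  have [<-//|ne] := eqVneq p.+1 y.-1.
  have lt1 : (p.+1 < y.-1)%N by rewrite ltn_neqAle ne -ltnS prednK //; lia.
  have lt2 : (y.-1 < y)%N by rewrite prednK //; lia.
  by have [] := convex_three_chord cy Syp1 Syy1 Syy lt1 lt2 ym.
have xp1 : (x < p.+1)%N by rewrite ltnS.
have [h1 h2] := three_chord (incrP xp1 p1m) (incrP p1y ym) (le_trans p1_p p_p1y).
by split; [apply: le_trans x_p1 h1 | apply: le_trans h2 p1y_y].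
Qed.

Lemma chord_bracketed_trans x y z : (x < y)%N -> (y < z)%N -> (z < m)%N ->
  chord_bracketed x y -> chord_bracketed y z -> slope y.-1 y <= slope y y.+1 ->
  chord_bracketed x z.
Proof.
move=> xy yz zm [h1 h2] [h3 h4] h5.
have [h6 h7] := three_chord (incrP xy (ltn_trans yz zm)) (incrP yz zm)
  (le_trans h2 (le_trans h5 h3)).
by split; [apply: le_trans h1 h6 | apply: le_trans h7 h4].
Qed.

Definition tangent_slope j :=
  if (j.+1 < m)%N then slope j j.+1 else if (0 < j)%N then slope j.-1 j else 0.

Definition support_line j (t : R) := f j + tangent_slope j * (t - P j).

Lemma support_line_le (G : pred nat) w w' :
  (forall x y, (x < y)%N -> (y < m)%N -> G x -> G y -> chord_bracketed x y) ->
  (forall i, G i -> (0 < i)%N -> (i.+1 < m)%N -> slope i.-1 i <= slope i i.+1) ->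
  G w -> G w' -> (w < m)%N -> (w' < m)%N -> support_line w (P w') <= f w'.
Proof.
move=> bracketG localG Gw Gw' wm w'm; rewrite /support_line.
case: (ltngtP w w') => ww'; last by rewrite ww' subrr mulr0 addr0.
- have [le_tan _] := bracketG _ _ ww' w'm Gw Gw'.
  have d : 0 < P w' - P w by rewrite subr_gt0 incrP.
  rewrite /tangent_slope ifT; last exact: leq_ltn_trans w'm.
  by rewrite -lerBrDl slopeK ?incrP // ler_pM2r.
- have [_ le_tan] := bracketG _ _ ww' wm Gw' Gw.
  have d : 0 < P w - P w' by rewrite subr_gt0 incrP.
  have tan_ge : slope w' w <= tangent_slope w.
    rewrite /tangent_slope; case: ifP => wm1.
      by apply: le_trans le_tan (localG _ Gw _ wm1); lia.
    by rewrite ifT //; lia.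
  have e := slopeK (incrP ww' wm).
  have := tan_ge; rewrite -(ler_pM2r d) => h.
  have -> : P w' - P w = - (P w - P w') by ring.
  lra.
Qed.

End Slopes.

Section Envelope.

Variables (I : finType) (G : pred I) (w0 : I) (a b : I -> R).
Hypothesis Gw0 : G w0.

Definition envelope (t : R) : R :=
  let w := Order.arg_max w0 G (fun w => a w + b w * t) in a w + b w * t.

Lemma envelope_ge w t : G w -> a w + b w * t <= envelope t.
Proof. by move=> Gw; rewrite /envelope; case: arg_maxP => // v _; apply. Qed.

Lemma envelope_attained t : exists2 w, G w & envelope t = a w + b w * t.
Proof. by rewrite /envelope; case: arg_maxP => // v Gv _; exists v. Qed.

Lemma envelope_convex n (B : {set 'I_n.+1}) : convex_on B (fun x => envelope (pos x)).
Proof.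
move=> x y z _ _ _ xy yz.
have [w Gw ->] := envelope_attained (pos y).
have [dxy dyz] : 0 < pos y - pos x /\ 0 < pos z - pos y by rewrite !subr_gt0 !ltr_nat.
have := envelope_ge (pos x) Gw; have := envelope_ge (pos z) Gw => ez ex.
apply: (@le_trans _ _ (b w)); [rewrite ler_pdivrMr // | rewrite ler_pdivlMr //]; lra.
Qed.

End Envelope.

Section SearchPaths.

Local Close Scope ring_scope.

Fixpoint search_path (fuel lo hi i : nat) : seq nat :=
  if fuel is fuel'.+1 then
    if hi <= lo.+2 then [::] else
    let mid := lo + (hi - lo) %/ 2 in
    mid.-1 :: mid ::
      (if i < mid then search_path fuel' lo mid i else search_path fuel' mid hi i)
  else [::].

(* Two points of [lo, hi) are either adjacent or separated by a split point
   of the binary search, whose two neighbours lie on both search paths. *)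
Lemma search_path_meet fuel lo hi x y :
  hi - lo <= fuel -> lo <= x -> x < y -> y < hi ->
  y = x.+1 \/ exists2 p, x <= p < y &
    {subset [:: p; p.+1] <= search_path fuel lo hi x} /\
    {subset [:: p; p.+1] <= search_path fuel lo hi y}.
Proof.
elim: fuel lo hi => [|fuel IH] lo hi hf lx xy yh /=; first lia.
case: ifP => small; first by left; lia.
have := divn_eq (hi - lo) 2; have := ltn_pmod (hi - lo) (isT : 0 < 2).
set mid := lo + _ => r2 e2.
have sub_cons a b (s t : seq nat) : {subset s <= t} -> {subset s <= a :: b :: t}.
  by move=> st z /st zt; rewrite !inE zt !orbT.
case: (ltnP x mid) => xm; case: (ltnP y mid) => ym.
- have [->|[p pxy [sx sy]]] := IH lo mid ltac:(lia) lx xy ym; first by left.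
  by right; exists p => //; split; apply: sub_cons.
- right; exists mid.-1; first lia.
  rewrite prednK; last lia.
  by split=> z; rewrite !inE => /orP[]->; rewrite ?orbT.
- lia.
- have [->|[p pxy [sx sy]]] := IH mid hi ltac:(lia) xm xy yh; first by left.
  by right; exists p => //; split; apply: sub_cons.
Qed.

Lemma size_search_path fuel lo hi i t :
  hi - lo <= 2 ^ t -> size (search_path fuel lo hi i) <= 2 * t.
Proof.
elim: fuel lo hi t => [|fuel IH] lo hi t ht //=.
case: ifP => small //.
have := divn_eq (hi - lo) 2; have := ltn_pmod (hi - lo) (isT : 0 < 2).
move=> r2 e2.
case: t ht => [|t]; first by rewrite expn0; lia.
rewrite expnS => ht.
have half : (hi - lo) %/ 2 <= 2 ^ t by lia.
by case: ifP => _ /=;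
  [have := IH lo (lo + (hi - lo) %/ 2) t | have := IH (lo + (hi - lo) %/ 2) hi t]; lia.
Qed.

Definition block_lo (s c i : nat) := (i + c) %/ s * s - c.
Definition block_hi (m s c i : nat) := minn m ((i + c) %/ s * s + s - c).

Lemma block_lo_le s c i : block_lo s c i <= i.
Proof. by rewrite /block_lo; have := leq_divM (i + c) s; lia. Qed.

Lemma block_hi_gt m s c i : 0 < s -> i < m -> i < block_hi m s c i.
Proof.
by move=> s0 im; rewrite /block_hi; have := ltn_ceil (i + c) s0; rewrite mulSn; lia.
Qed.

Lemma block_size m s c i : block_hi m s c i - block_lo s c i <= s.
Proof. by rewrite /block_hi /block_lo; lia. Qed.

Lemma divn_between q s a : 0 < s -> q * s <= a < q * s + s -> a %/ s = q.
Proof.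
move=> s0 /andP[h1 h2]; apply/eqP; rewrite eqn_leq leq_divRL // h1 andbT.
by rewrite -ltnS ltn_divLR // mulSn addnC.
Qed.

(* Blocks of length 2h, shifted by 0 or by h: two points at distance at most h
   share a block in one of the two partitions. *)
Lemma same_block_shift h u v : 0 < h -> u < v -> v - u <= h ->
  u %/ (h + h) = v %/ (h + h) \/ (u + h) %/ (h + h) = (v + h) %/ (h + h).
Proof.
move=> h0 uv vu; set s := h + h.
have s0 : 0 < s by rewrite /s; lia.
have [e|ne] := eqVneq (u %/ s) (v %/ s); [by left | right].
set q := v %/ s.
have lt : u %/ s < q by rewrite ltn_neqAle ne leq_div2r // ltnW.
have uq : u < q * s by rewrite -ltn_divLR.
have qv : q * s <= v by apply: leq_divM.
by rewrite (@divn_between q s (u + h)) ?(@divn_between q s (v + h)) //;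
  rewrite /s in uq qv *; lia.
Qed.

End SearchPaths.

Section SortedElements.

Variables (n : nat) (B : {set 'I_n.+1}).

Definition elem (i : nat) : 'I_n.+1 := nth ord0 (enum B) i.

Lemma elem_in i : (i < #|B|)%N -> elem i \in B.
Proof. by move=> iB; rewrite /elem -mem_enum mem_nth // -cardE. Qed.

Lemma elem_onto x : x \in B -> exists2 i, (i < #|B|)%N & elem i = x.
Proof.
move=> xB; exists (index x (enum B)); first by rewrite cardE index_mem mem_enum.
by rewrite /elem nth_index // mem_enum.
Qed.

Lemma elem_mono i j : (i < j)%N -> (j < #|B|)%N -> (elem i < elem j)%N.
Proof.
have ltn_tr : transitive (relpre (@nat_of_ord n.+1) ltn).
  by move=> x y z /=; apply: ltn_trans.
have sortedB : sorted (relpre val ltn) (enum B).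
  rewrite /enum_mem -enumT; apply: sorted_filter => //.
  by rewrite -sorted_map val_enum_ord iota_ltn_sorted.
move=> ij jB; apply: (sorted_ltn_nth ltn_tr ord0 sortedB) => //;
  rewrite inE -cardE //; exact: ltn_trans jB.
Qed.

Definition elem_pos (i : nat) : R := pos (elem i).

Lemma elem_pos_increasing : increasing_below elem_pos #|B|.
Proof. by move=> i j ij jB; rewrite /elem_pos /pos ltr_nat elem_mono. Qed.

End SortedElements.

Definition convex_answers n (q : seq 'I_n.+1) (vs : seq R) : bool :=
  [forall a : 'I_(size q), forall b : 'I_(size q), forall c : 'I_(size q),
    ((nth ord0 q a < nth ord0 q b) && (nth ord0 q b < nth ord0 q c))%N ==>
    ((nth 0 vs b - nth 0 vs a) / (pos (nth ord0 q b) - pos (nth ord0 q a)) <=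
     (nth 0 vs c - nth 0 vs b) / (pos (nth ord0 q c) - pos (nth ord0 q b)))].

Lemma convex_answersP n (q : seq 'I_n.+1) (g : 'I_n.+1 -> R) :
  reflect (convex_on [set x in q] g) (convex_answers q (map g q)).
Proof.
apply: (iffP forallP) => [cvx_q x y z | cvx_q a].
  rewrite !inE => xq yq zq xy yz.
  have idx w : w \in q -> (index w q < size q)%N by rewrite index_mem.
  have := cvx_q (Ordinal (idx x xq)) => /forallP /(_ (Ordinal (idx y yq)))
    /forallP /(_ (Ordinal (idx z zq))) /implyP /=.
  by rewrite !(nth_map ord0) ?idx // !nth_index // xy yz; apply.
apply/forallP => b; apply/forallP => c; apply/implyP => /andP[ab bc].
by rewrite !(nth_map ord0) //; apply: cvx_q; rewrite // inE mem_nth.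
Qed.

Lemma convex_on_sub n (A B : {set 'I_n.+1}) (g : 'I_n.+1 -> R) :
  A \subset B -> convex_on B g -> convex_on A g.
Proof. by move=> /subsetP AB cvxB x y z /AB xB /AB yB /AB zB; apply: cvxB. Qed.

Lemma convex_at_elem n (B : {set 'I_n.+1}) (J : seq nat) (g : 'I_n.+1 -> R) :
  {in J, forall j, j < #|B|}%N -> convex_on [set x in map (elem B) J] g ->
  convex_at (fun j => g (elem B j)) (elem_pos B) (mem J).
Proof.
move=> JB cvxJ a b c aJ bJ cJ ab bc.
have cB := JB c cJ.
apply: cvxJ; rewrite ?inE ?map_f //; apply: elem_mono => //.
exact: ltn_trans bc cB.
Qed.

Lemma gap_le_card_rejected m (G : pred nat) x v : (v <= m)%N ->
  (forall j, (x < j < v)%N -> ~~ G j) -> (v - x.+1 <= #|[set w : 'I_m | ~~ G w]|)%N.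
Proof.
move=> vm notG.
have in_m (j : 'I_(v - x.+1)) : (x.+1 + j < m)%N by have := ltn_ord j; lia.
pose shift j := Ordinal (in_m j).
have shift_inj : injective shift.
  by move=> a b /(congr1 val) /= e; apply: val_inj => /=; lia.
rewrite -{1}(card_ord (v - x.+1)) -(card_imset (mem 'I_(v - x.+1)) shift_inj).
apply: subset_leq_card; apply/subsetP => _ /imsetP[j _ ->].
by rewrite inE notG //=; have := ltn_ord j; lia.
Qed.

Section Tester.

Variables (n : nat) (B : {set 'I_n.+1}) (h : nat).

Local Notation m := #|B|.

Definition block_path (c i : nat) : seq nat :=
  search_path (h + h) (block_lo (h + h) c i) (block_hi m (h + h) c i) i.

Definition query_indices (i : nat) : seq nat :=
  [seq j <- [:: i.-1; i; i.+1] ++ block_path 0 i ++ block_path h i | (j < m)%N].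

Definition queries_at (i : nat) : seq 'I_n.+1 := map (elem B) (query_indices i).

Lemma queries_at_in i : all (fun x => x \in B) (queries_at i).
Proof.
by apply/allP => _ /mapP[j + ->]; rewrite mem_filter => /andP[jB _]; exact: elem_in.
Qed.

Variable g : 'I_n.+1 -> R.

Local Notation gB := (fun j => g (elem B j)).
Local Notation slopeB := (slope gB (elem_pos B)).

Definition accepts_at (i : nat) : bool := convex_answers (queries_at i) (map g (queries_at i)).

Lemma accepts_at_convex i : accepts_at i -> convex_at gB (elem_pos B) (mem (query_indices i)).
Proof.
move=> /convex_answersP; apply: convex_at_elem => j.
by rewrite mem_filter => /andP[].
Qed.

Lemma mem_query_indices i j : (j < m)%N ->
  j \in [:: i.-1; i; i.+1] ++ block_path 0 i ++ block_path h i -> j \in query_indices i.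
Proof. by rewrite mem_filter => -> ->. Qed.

Lemma accepts_at_local i : accepts_at i -> (0 < i)%N -> (i.+1 < m)%N ->
  slopeB i.-1 i <= slopeB i i.+1.
Proof.
move=> /accepts_at_convex cvx_i i0 im.
by apply: cvx_i; rewrite ?prednK //; apply: mem_query_indices;
  rewrite ?inE ?eqxx ?orbT //; lia.
Qed.

Lemma accepts_at_bracketed_close u v : (0 < h)%N ->
  accepts_at u -> accepts_at v -> (u < v)%N -> (v < m)%N -> (v - u <= h)%N ->
  chord_bracketed gB (elem_pos B) u v.
Proof.
move=> h0 au av uv vm vu.
have [cvx_u cvx_v] := (accepts_at_convex au, accepts_at_convex av).
have through := chord_bracketed_through (@elem_pos_increasing _ B) cvx_u cvx_v.
have near i j : (j < m)%N -> j \in [:: i.-1; i; i.+1] -> j \in query_indices i.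
  by move=> jm ji; apply: mem_query_indices; rewrite // mem_cat ji.
have uQu : u \in query_indices u by apply: near; [lia | rewrite !inE eqxx orbT].
have u1Qu : u.+1 \in query_indices u by apply: near; [lia | rewrite !inE eqxx !orbT].
have vQv : v \in query_indices v by apply: near; [lia | rewrite !inE eqxx orbT].
have v1Qv : v.-1 \in query_indices v by apply: near; [lia | rewrite !inE eqxx].
have common c : (c = 0 \/ c = h)%N -> ((u + c) %/ (h + h) = (v + c) %/ (h + h))%N ->
    chord_bracketed gB (elem_pos B) u v.
  move=> c0h uv_c.
  have same : block_path c v =
      search_path (h + h) (block_lo (h + h) c u) (block_hi m (h + h) c u) v.
    by rewrite /block_path /block_lo /block_hi -uv_c.
  have in_path i j : (j < m)%N -> j \in block_path c i -> j \in query_indices i.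
    move=> jm ji; apply: mem_query_indices; rewrite // !mem_cat.
    by case: c0h => c_eq; rewrite -c_eq ji ?orbT.
  have v_hi : (v < block_hi m (h + h) c u)%N.
    by rewrite /block_hi uv_c -/(block_hi m (h + h) c v) block_hi_gt //; lia.
  have [ev|[p /andP[up pv] [sub_u sub_v]]] :=
    search_path_meet (block_size m (h + h) c u) (block_lo_le (h + h) c u) uv v_hi.
    by subst v; apply: (through u u.+1 u) => //; rewrite ?leqnn.
  rewrite -/(block_path c u) in sub_u; rewrite -same in sub_v.
  have [p1m pm] : (p.+1 < m)%N /\ (p < m)%N by split; lia.
  apply: (through u v p) => //; apply: in_path => //;
    by (apply: sub_u || apply: sub_v); rewrite !inE eqxx ?orbT.
have [e|e] := same_block_shift h0 uv vu.
  by apply: (common 0%N); [left | rewrite !addn0].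
by apply: (common h); [right |].
Qed.

Definition rejected := [set w : 'I_m | ~~ accepts_at w].

Lemma accepts_at_bracketed : (0 < h)%N -> (#|rejected| < h)%N ->
  forall x y, (x < y)%N -> (y < m)%N -> accepts_at x -> accepts_at y ->
  chord_bracketed gB (elem_pos B) x y.
Proof.
move=> h0 few_rejected x y.
move: {2}(y - x)%N (leqnn (y - x)%N) => d.
elim: d x y => [|d IH] x y yd xy ym ax ay; first lia.
have ex_v : exists j, (x < j)%N && accepts_at j by exists y; rewrite xy ay.
have [v /andP[xv av] v_min] := ex_minnP ex_v.
have vy : (v <= y)%N by apply: v_min; rewrite xy ay.
have vm : (v < m)%N by apply: leq_ltn_trans ym.
have between j : (x < j < v)%N -> ~~ accepts_at j.
  move=> /andP[xj jv]; apply/negP => aj.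
  by have := v_min j; rewrite xj aj => /(_ isT); lia.
have gap : (v - x <= h)%N.
  by have := gap_le_card_rejected (ltnW vm) between; rewrite -/rejected; lia.
have xv_br := accepts_at_bracketed_close h0 ax av xv vm gap.
have [<-//|ne] := eqVneq v y.
have vy' : (v < y)%N by rewrite ltn_neqAle ne.
have vy_br : chord_bracketed gB (elem_pos B) v y by apply: IH; lia.
apply: (chord_bracketed_trans (@elem_pos_increasing _ B) xv vy' ym xv_br vy_br).
by apply: accepts_at_local av _ _; [apply: leq_ltn_trans xv | apply: leq_ltn_trans ym].
Qed.

Lemma close_to_convex : (0 < h)%N -> (#|rejected| < h)%N ->
  exists2 g' : 'I_n.+1 -> R, convex_on B g' &
    (#|[set x in B | g x != g' x]| <= #|rejected|)%N.
Proof.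
move=> h0 few_rejected.
have [w0 aw0 | none] := pickP (fun w : 'I_m => accepts_at w); last first.
  exists (fun=> 0); first by move=> x y z _ _ _ _ _; rewrite !subrr !mul0r.
  have -> : rejected = setT by apply/setP => w; rewrite !inE none.
  rewrite cardsT card_ord subset_leq_card //.
  by apply/subsetP => x; rewrite inE => /andP[].
pose b (w : 'I_m) := tangent_slope gB (elem_pos B) m w.
pose a (w : 'I_m) := g (elem B w) - b w * elem_pos B w.
have lineE w t : a w + b w * t = support_line gB (elem_pos B) m w t.
  by rewrite /a /b /support_line; ring.
pose G := fun w : 'I_m => accepts_at w.
have agree (i : 'I_m) : accepts_at i -> envelope G w0 a b (elem_pos B i) = g (elem B i).
  move=> ai; apply/le_anti/andP; split; last first.
    have := @envelope_ge _ G w0 a b aw0 i (elem_pos B i) ai.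
    by rewrite lineE /support_line subrr mulr0 addr0.
  have [w aw ->] := @envelope_attained _ G w0 a b aw0 (elem_pos B i).
  rewrite lineE; apply: (support_line_le (@elem_pos_increasing _ B)
    (accepts_at_bracketed h0 few_rejected) accepts_at_local) => //.
exists (fun x => envelope G w0 a b (pos x)); first exact: envelope_convex.
apply: leq_trans (leq_imset_card (elem B \o val) rejected).
apply: subset_leq_card; apply/subsetP => x; rewrite inE => /andP[xB gx].
have [i im ex] := elem_onto xB; subst x.
apply/imsetP; exists (Ordinal im) => //; rewrite inE.
by apply: contra gx => ai; rewrite -[pos _]/(elem_pos B (Ordinal im)) agree.
Qed.

End Tester.

Lemma size_queries_at n (B : {set 'I_n.+1}) h i :
  (size (queries_at B h i) <= 7 + 4 * trunc_log 2 (h + h))%N.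
Proof.
set j := trunc_log 2 (h + h).
have path_size c : (size (block_path B h c i) <= 2 * j.+1)%N.
  apply: size_search_path; apply: leq_trans (block_size _ _ _ _) _.
  exact/ltnW/trunc_log_ltn.
rewrite size_map size_filter; apply: leq_trans (count_size _ _) _.
by rewrite !size_cat /=; have := path_size 0%N; have := path_size h; lia.
Qed.

Section ConvexityTester.

Variables (n : nat) (B : {set 'I_n.+1}) (h : nat).
Hypothesis B_gt0 : (0 < #|B|)%N.

Lemma uniform_sum1 : \sum_(w : 'I_#|B|) (#|B|%:R : R)^-1 = 1.
Proof. by rewrite sumr_const card_ord -[LHS]mulr_natr mulVf // pnatr_eq0 -lt0n. Qed.

Definition convexity_tester : nonadaptive_tester B :=
  @NATester n B 'I_#|B| (fun=> #|B|%:R^-1) (queries_at B h)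
    (fun w => convex_answers (queries_at B h w))
    (fun=> ltac:(by rewrite invr_ge0 ler0n)) uniform_sum1 (queries_at_in B h).

Lemma convexity_tester_complete g : convex_on B g -> accept_prob convexity_tester g = 1.
Proof.
move=> cvx_g; rewrite /accept_prob /= -[RHS]uniform_sum1; apply: eq_bigl => w.
by apply/convex_answersP; apply: convex_on_sub cvx_g; apply/subsetP => x;
  rewrite inE => /(allP (queries_at_in B h w)).
Qed.

Lemma reject_prob_convexity_tester g :
  reject_prob convexity_tester g = #|rejected B h g|%:R / #|B|%:R.
Proof.
rewrite /reject_prob /= (eq_bigl (mem (rejected B h g))) => [|w]; last by rewrite !inE.
by rewrite sumr_const mulr_natl.
Qed.

End ConvexityTester.

Lemma query_count_le_log2 (k : R) : 0 <= k ->
  ((7 + 4 * trunc_log 2 ((Num.truncn k).+1 + (Num.truncn k).+1))%N)%:R <=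
    20 * Num.max 1 (log2 k).
Proof.
move=> k0; set N := (Num.truncn k).+1; set j := trunc_log 2 (N + N).
have two_j : (2 ^ j <= N + N)%N by apply: trunc_logP.
have N_le : N%:R <= k + 1 by rewrite /N -addn1 natrD lerD2r truncn_le.
set M := Num.max 1 k.
have [M1 kM] : 1 <= M /\ k <= M by rewrite !le_max !lexx orbT.
have M0 : 0 < M by apply: lt_le_trans M1.
have ln2 : 0 < ln (2 : R) by apply: ln_gt0; lra.
have j_ln : j%:R * ln (2 : R) <= ln (2 : R) *+ 2 + ln M.
  have -> : j%:R * ln (2 : R) = ln ((2 ^ j)%:R : R) by rewrite natrX lnXn // mulr_natl.
  have -> : ln (2 : R) *+ 2 + ln M = ln (4 * M).
    have -> : (4 : R) = 2 ^+ 2 by rewrite expr2; lra.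
    by rewrite lnM ?posrE ?exprn_gt0 // lnXn.
  rewrite ler_ln ?posrE ?ltr0n ?expn_gt0 ?mulr_gt0 //.
  by apply: le_trans (_ : (N + N)%:R <= _); rewrite ?ler_nat // natrD; lra.
have ln_M : ln M / ln 2 <= Num.max 1 (log2 k).
  have [k1|k1] := lerP k 1; first by rewrite /M max_l // ln1 mul0r le_max ler01.
  by rewrite /M max_r ?le_max ?lexx ?orbT // ltW.
have j_le : j%:R <= 2 + Num.max 1 (log2 k).
  apply: le_trans (_ : (ln (2 : R) *+ 2 + ln M) / ln 2 <= _); first by rewrite ler_pdivlMr.
  by rewrite mulrDl mulrnAl divff ?gt_eqF //; lra.
have : 1 <= Num.max 1 (log2 k) by rewrite le_max lexx.
by rewrite natrD natrM; lra.
Qed.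


Theorem mainTheorem7 :
  exists C : R, 0 < C /\
  forall (n : nat) (B : {set 'I_n.+1}) (eps : R),
    subset_of_n B -> B != set0 -> 0 < eps -> eps < 1 ->
    exists T : nonadaptive_tester B,
      query_bound T (C * Num.max 1 (log2 (eps * (#|B|)%:R))) /\
      (forall g : 'I_n.+1 -> R, convex_on B g -> accept_prob T g = 1) /\
      (forall g : 'I_n.+1 -> R, far_from_convex B eps g -> eps <= reject_prob T g).
Proof.
exists 20; split=> // n B eps _ B_ne0 eps0 _.
have B_gt0 : (0 < #|B|)%N by rewrite card_gt0.
have k0 : 0 <= eps * #|B|%:R by rewrite mulr_ge0 // ltW.
set h := (Num.truncn (eps * #|B|%:R)).+1.
exists (convexity_tester h B_gt0); split; [|split].
- move=> w; apply: le_trans (query_count_le_log2 k0).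
  by rewrite ler_nat size_queries_at.
- exact: convexity_tester_complete.
- move=> g far_g; rewrite reject_prob_convexity_tester ler_pdivlMr ?ltr0n //.
  have [few|many] := ltnP #|rejected B h g| h.
    have [g' cvx_g' diff] := close_to_convex (ltn0Sn _) few.
    by apply: le_trans (far_g g' cvx_g') _; rewrite ler_nat.
  apply: le_trans (ltW (truncnS_gt _)) _.
  by rewrite ler_nat.
Qed.
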